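(* Let $n\in\mathbb{N}$ and $m=(n-1)^2+1$. Let $G$ be a finite group of order $mn$ and $H$ a normal subgroup of $G$ of order $n$. Suppose $D$ is an $(mn,(n-1)^2+n,n)$-difference set in $G$ with $H\subseteq D$, and let $R=D\setminus H$. Then (i) $R$ is an $(m,n,m-1,n-2)$-relative difference set in $G$ relative to $H$; (ii) the family $\{hR: h\in H\}$ is an $(n[(n-1)^2+1],n,(n-1)^2,n(n-2),0)$-DPDF and an $(n[(n-1)^2+1],n,(n-1)^2,n(n-1)(n-2),n(n-1)^2)$-EPDF in $G$.
   Context: Groups are written multiplicatively with identity $e$; $G^*=G\setminus\{e\}$; $hR=\{hr:r\in R\}$. For $D\subseteq G$, $\Delta(D)$ is the multiset $\{xy^{-1}: x,y\in D, x\ne y\}$; for $D_1,D_2\subseteq G$, $\Delta(D_1,D_2)$ is the multiset $\{xy^{-1}:x\in D_1,y\in D_2\}$. A $(v,k,\lambda)$-difference set in a group of order $v$ is a $k$-subset $D$ such that $\Delta(D)$ contains each element of $G^*$ exactly $\lambda$ times. If $|G|=mn$ and $H$ is a normal subgroup of order $n$, a $k$-subset $R$ is an $(m,n,k,\lambda)$-relative difference set relative to $H$ if $\Delta(R)$ contains each element of $G\setminus H$ exactly $\lambda$ times and no element of $H\setminus\{e\}$. For a family $A=\{A_1,\dots,A_s\}$ of pairwise disjoint subsets, ${\rm Int}(A)=\bigcup_i\Delta(A_i)$ and ${\rm Ext}(A)=\bigcup_{i\ne j}\Delta(A_i,A_j)$ (multiset unions). For $|G|=v$, a $(v,s,k,\lambda,\mu)$-DPDF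 is a family of $s$ pairwise disjoint $k$-subsets of $G^*$ with union $S$ such that ${\rm Int}(A)$ contains each element of $S$ exactly $\lambda$ times and each element of $G\setminus(S\cup\{e\})$ exactly $\mu$ times; a $(v,s,k,\lambda,\mu)$-EPDF is defined the same way using ${\rm Ext}(A)$. *)

From mathcomp Require Import all_boot all_order all_fingroup.
Set Implicit Arguments. Unset Strict Implicit. Unset Printing Implicit Defensive.
Local Open Scope group_scope.

Section Diff.
Variable gT : finGroupType.

Definition dcount (D : {set gT}) (g : gT) : nat :=
  #|[set p : gT * gT | [&& p.1 \in D, p.2 \in D, p.1 != p.2 & p.1 * p.2^-1 == g]]|.

Definition dcount2 (D1 D2 : {set gT}) (g : gT) : nat :=
  #|[set p : gT * gT | [&& p.1 \in D1, p.2 \in D2 & p.1 * p.2^-1 == g]]|.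

Definition diff_set (G : {group gT}) (v k lam : nat) (D : {set gT}) : Prop :=
  [/\ #|G| = v, D \subset G, #|D| = k &
      forall g, g \in G -> g != 1 -> dcount D g = lam].

Definition rel_diff_set (G H : {group gT}) (m n k lam : nat) (R : {set gT}) : Prop :=
  [/\ #|G| = (m * n)%N, H <| G, #|H| = n, R \subset G & #|R| = k] /\
  [/\ (forall g, g \in G :\: H -> dcount R g = lam) &
      (forall g, g \in H -> g != 1 -> dcount R g = 0)].

Definition int_count (F : {set {set gT}}) (g : gT) : nat :=
  \sum_(A in F) dcount A g.
Definition ext_count (F : {set {set gT}}) (g : gT) : nat :=
  \sum_(A in F) \sum_(B in F | B != A) dcount2 A B g.

Definition pdf_family (G : {group gT}) (v s k : nat) (F : {set {set gT}}) : Prop :=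
  [/\ #|G| = v, #|F| = s,
      (forall A, A \in F -> A \subset G :\ 1 /\ #|A| = k) &
      (forall A B, A \in F -> B \in F -> A != B -> [disjoint A & B])].

Definition DPDF (G : {group gT}) (v s k lam mu : nat) (F : {set {set gT}}) : Prop :=
  pdf_family G v s k F /\
  forall g, g \in G ->
    (g \in cover F -> int_count F g = lam) /\
    (g \notin cover F -> g != 1 -> int_count F g = mu).

Definition EPDF (G : {group gT}) (v s k lam mu : nat) (F : {set {set gT}}) : Prop :=
  pdf_family G v s k F /\
  forall g, g \in G ->
    (g \in cover F -> ext_count F g = lam) /\
    (g \notin cover F -> g != 1 -> ext_count F g = mu).

End Diff.

(* Counting the solutions of x y^-1 = g
   in D block by block, the H x H block contributes |H| if g is in H and
   nothing otherwise, while the two mixed blocks count |R :&: g^-1 H| and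
   |R :&: g H|.  For g in H^# the hypothesis lambda = n = |H| therefore leaves
   no difference of R in H, so R meets each coset of H at most once; since R
   avoids H and |R| = |G : H| - 1, it meets every other coset exactly once,
   and for g outside H the count reads n = 1 + 1 + Delta_R(g).  The translates
   hR (h in H) partition G :\: H, each has the internal differences of R
   conjugated by h, and their external differences follow from
   Int + Ext = Delta(G :\: H). *)

From mathcomp Require Import all_boot all_order all_fingroup.
From mathcomp Require Import zify.
Set Implicit Arguments. Unset Strict Implicit. Unset Printing Implicit Defensive.
Local Open Scope group_scope.

Section DifferenceCounts.
Variable gT : finGroupType.
Implicit Types (A B : {set gT}) (F : {set {set gT}}) (g : gT).

Lemma dcount2E A B g : dcount2 A B g = #|[set y in B | g * y \in A]|.
Proof.
rewrite /dcount2 -(card_in_imset (f := fun y => (g * y, y))); last by move=> x y _ _ [].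
apply: eq_card => -[x y]; rewrite !inE /=; apply/idP/imsetP => [|[z]].
- by case/and3P=> xA yB /eqP <-; exists y; rewrite ?inE ?yB mulgKV.
- by rewrite inE => /andP[zB gzA] [-> ->]; rewrite gzA zB mulgK eqxx.
Qed.

Lemma dcount2_sum A B g : dcount2 A B g = \sum_(y in B) ((g * y)%g \in A).
Proof. by rewrite dcount2E -sum1dep_card big_mkcondr /=. Qed.

Lemma dcount_dcount2 A g : g != 1 -> dcount A g = dcount2 A A g.
Proof.
move=> g1; apply: eq_card => -[x y]; rewrite !inE /=.
by case: eqVneq => [->|//]; rewrite mulgV eq_sym (negbTE g1) !andbF.
Qed.

Lemma dcount2V A B g : dcount2 A B g = dcount2 B A g^-1.
Proof.
rewrite /dcount2 -(card_preimset _ (can_inj swap_pairK)).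
apply: eq_card => -[x y]; rewrite !inE /= -[in RHS](can_eq (@invgK gT)) invMg !invgK.
by rewrite andbCA.
Qed.

Lemma dcount2_lcoset A B a b g :
  dcount2 (a *: A) (b *: B) g = dcount2 A B (a^-1 * g * b).
Proof.
rewrite !dcount2E -(card_preimset _ (mulgI b)); apply: eq_card => y.
by rewrite !inE !mem_lcoset mulKg !mulgA.
Qed.

Lemma dcount2_setI_lcoset A B g : dcount2 A B g = #|A :&: g *: B|.
Proof. by rewrite dcount2V dcount2E; apply: eq_card => y; rewrite !inE mem_lcoset. Qed.

Lemma dcount2_setUr A B1 B2 g : [disjoint B1 & B2] ->
  dcount2 A (B1 :|: B2) g = dcount2 A B1 g + dcount2 A B2 g.
Proof.
by move=> dB; rewrite !dcount2_sum -bigU //=; apply: eq_bigl => y; rewrite inE.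
Qed.

Lemma dcount2_setUl A1 A2 B g : [disjoint A1 & A2] ->
  dcount2 (A1 :|: A2) B g = dcount2 A1 B g + dcount2 A2 B g.
Proof. by move=> dA; rewrite !(dcount2V _ B) dcount2_setUr. Qed.

Lemma dcount2_cover_r A F g : trivIset F ->
  dcount2 A (cover F) g = \sum_(B in F) dcount2 A B g.
Proof.
by move=> tiF; rewrite dcount2_sum big_trivIset //; apply: eq_bigr => B _; rewrite dcount2_sum.
Qed.

Lemma dcount2_cover_l F B g : trivIset F ->
  dcount2 (cover F) B g = \sum_(A in F) dcount2 A B g.
Proof.
move=> tiF; rewrite dcount2V dcount2_cover_r //.
by apply: eq_bigr => A _; rewrite dcount2V invgK.
Qed.

Lemma dcount_cover F g : trivIset F -> g != 1 ->
  int_count F g + ext_count F g = dcount (cover F) g.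
Proof.
move=> tiF g1; rewrite dcount_dcount2 // dcount2_cover_l //.
rewrite /int_count /ext_count -big_split /=.
by apply: eq_bigr => A AF; rewrite dcount2_cover_r // [RHS](bigD1 A) //= dcount_dcount2.
Qed.

Lemma lcoset_group_disjoint (H : {group gT}) g : g \notin H -> H :&: g *: H = set0.
Proof.
move=> gH; apply/setP=> y; rewrite !inE mem_lcoset.
by apply/negbTE/andP=> -[yH]; rewrite groupMr // groupV; apply/negP.
Qed.

Section SplitByGroup.
Variables (H : {group gT}) (B : {set gT}).
Hypothesis dHB : [disjoint H & B].

Lemma dcount2_setU_group g : dcount2 (H :|: B) (H :|: B) g =
  #|H :&: g *: H| + #|B :&: g^-1 *: H| + #|B :&: g *: H| + dcount2 B B g.
Proof.
rewrite dcount2_setUl // !dcount2_setUr // (dcount2V H B) !(dcount2_setI_lcoset _ H).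
by rewrite !addnA.
Qed.

Lemma dcount2_setU_group_in g : g \in H ->
  dcount2 (H :|: B) (H :|: B) g = #|H| + dcount2 B B g.
Proof.
move=> gH; rewrite dcount2_setU_group !lcoset_id ?groupV // setIid.
by rewrite setIC (disjoint_setI0 dHB) cards0 !addn0.
Qed.

Lemma dcount2_setU_group_out g : g \notin H -> dcount2 (H :|: B) (H :|: B) g =
  #|B :&: g^-1 *: H| + #|B :&: g *: H| + dcount2 B B g.
Proof. by move=> gH; rewrite dcount2_setU_group lcoset_group_disjoint // cards0. Qed.

End SplitByGroup.

Lemma setUD_subset (A C : {set gT}) : A \subset C -> A :|: C :\: A = C.
Proof.
move=> sAC; apply/setP=> y; rewrite !inE.
by case yA: (y \in A); rewrite /= ?(subsetP sAC y yA).
Qed.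

Lemma disjoint_setD (A C : {set gT}) : [disjoint A & C :\: A].
Proof. by rewrite disjoint_sym disjoints_subset subsetDr. Qed.

Lemma setD_group_neq1 (G H : {group gT}) g : g \in G :\: H -> g != 1.
Proof. by apply: contraTneq => ->; rewrite !inE group1. Qed.

Section ComplementOfSubgroup.
Variables (G H : {group gT}).
Hypothesis sHG : H \subset G.

Lemma dcount_setD_group_in g : g \in H -> g != 1 -> dcount (G :\: H) g = #|G| - #|H|.
Proof.
move=> gH g1; have := dcount2_setU_group_in (disjoint_setD H G) gH.
rewrite setUD_subset // dcount2_setI_lcoset (lcoset_id (subsetP sHG _ gH)) setIid.
by rewrite -dcount_dcount2 // => ->; rewrite addKn.
Qed.

Lemma dcount_setD_group_out g : g \in G :\: H -> dcount (G :\: H) g = (#|G| - 2 * #|H|)%N.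
Proof.
move=> gGH; have g1 := setD_group_neq1 gGH; case/setDP: gGH => gG gH.
have cosetI x : x \in G :\: H -> #|(G :\: H) :&: x *: H| = #|H|.
  case/setDP=> xG xH; rewrite (setIidPr _) ?card_lcoset //.
  apply/subsetP=> _ /lcosetP[y yH ->]; rewrite inE groupMr // xH.
  by rewrite groupM // (subsetP sHG).
have := dcount2_setU_group_out (disjoint_setD H G) gH.
rewrite setUD_subset // dcount2_setI_lcoset lcoset_id // setIid -dcount_dcount2 //.
by rewrite !cosetI ?inE ?groupV ?gG ?gH // => ->; rewrite addnn -mul2n addnC addnK.
Qed.

Lemma rcoset_neq_group x : x \notin H -> H :* x != H.
Proof. by apply: contraNneq => <-; apply: rcoset_refl. Qed.

Lemma card_setI_rcoset_eq1 (R : {set gT}) :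
    R \subset G :\: H -> {in R &, forall x y, x * y^-1 \in H -> x = y} ->
    #|R|.+1 = #|G : H| ->
  forall x, x \in G :\: H -> #|R :&: H :* x| = 1%N.
Proof.
move=> sRGH injR cardR x /setDP[xG xH].
have HR_inj : {in R &, injective (fun r => H :* r)}.
  by move=> r1 r2 r1R r2R /rcoset_eqP; rewrite mem_rcoset; apply: injR.
have HR_eq : [set H :* r | r in R] = rcosets H G :\ (H : {set gT}).
  apply/eqP; rewrite eqEcard card_in_imset //; apply/andP; split.
    apply/subsetP=> _ /imsetP[r rR ->]; have /setDP[rG rH] := subsetP sRGH r rR.
    by rewrite !inE rcoset_neq_group //; apply/rcosetsP; exists r.
  have H_rcoset : (H : {set gT}) \in rcosets H G by apply/rcosetsP; exists 1; rewrite ?rcoset1.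
  by move: cardR; rewrite /indexg (cardsD1 (H : {set gT})) H_rcoset => -[->].
have /imsetP[r rR Hxr] : H :* x \in [set H :* r | r in R].
  by rewrite HR_eq !inE rcoset_neq_group //; apply/rcosetsP; exists x.
rewrite (_ : R :&: H :* x = [set r]) ?cards1 //; apply/setP=> y.
rewrite !inE Hxr; apply/andP/eqP=> [[yR]|->]; last by rewrite rR rcoset_refl.
by rewrite mem_rcoset => /injR; apply.
Qed.

End ComplementOfSubgroup.

End DifferenceCounts.

Section DifferenceSetContainingSubgroup.
Variables (n : nat) (gT : finGroupType) (G H : {group gT}) (D : {set gT}).
Hypotheses (oG : #|G| = (((n - 1) ^ 2 + 1) * n)%N) (nHG : H <| G) (oH : #|H| = n).
Hypotheses (sDG : D \subset G) (oD : #|D| = ((n - 1) ^ 2 + n)%N).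
Hypotheses (dD : forall g, g \in G -> g != 1 -> dcount D g = n) (sHD : H \subset D).

Let R := D :\: H.

Let sHG : H \subset G := normal_sub nHG.

Let rlcoset_H x : x \in G -> H :* x = x *: H.
Proof. by move=> xG; rewrite norm_rlcoset // (subsetP (normal_norm nHG)). Qed.

Lemma D_eq_HUR : D = H :|: R.
Proof. by rewrite setUD_subset. Qed.

Lemma subset_R_setD : R \subset G :\: H.
Proof. by apply: setSD. Qed.

Lemma card_R : #|R| = ((n - 1) ^ 2)%N.
Proof. by rewrite cardsD (setIidPr sHD) oD oH addnK. Qed.

Lemma indexg_H : #|G : H| = ((n - 1) ^ 2 + 1)%N.
Proof.
have n_gt0 : (0 < n)%N by rewrite -oH cardG_gt0.
by apply/eqP; rewrite -(eqn_pmul2l n_gt0) -oH Lagrange // oH oG mulnC.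
Qed.

Lemma dcount_R_in g : g \in H -> g != 1 -> dcount R g = 0%N.
Proof.
move=> gH g1; have := dD (subsetP sHG g gH) g1.
rewrite dcount_dcount2 // D_eq_HUR dcount2_setU_group_in ?disjoint_setD // oH.
by rewrite -dcount_dcount2 //; lia.
Qed.

Lemma R_rcoset_inj : {in R &, forall x y, x * y^-1 \in H -> x = y}.
Proof.
move=> x y xR yR xyH; case: (eqVneq x y) => // nxy.
have := dcount_R_in xyH; rewrite -eq_mulgV1 => /(_ nxy) /eqP; rewrite cards_eq0.
by move=> /eqP/setP/(_ (x, y)); rewrite in_set /= xR yR nxy eqxx in_set0.
Qed.

Lemma card_R_lcoset x : x \in G :\: H -> #|R :&: x *: H| = 1%N.
Proof.
move=> xGH; have /setDP[xG _] := xGH; rewrite -rlcoset_H //.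
apply: (card_setI_rcoset_eq1 subset_R_setD R_rcoset_inj _ xGH).
by rewrite card_R indexg_H addn1.
Qed.

Lemma dcount_R_out g : g \in G :\: H -> dcount R g = (n - 2)%N.
Proof.
move=> gGH; have g1 := setD_group_neq1 gGH; have /setDP[gG gH] := gGH.
have := dD gG g1; rewrite dcount_dcount2 // D_eq_HUR dcount2_setU_group_out ?disjoint_setD //.
by rewrite !card_R_lcoset ?inE ?groupV ?gG ?gH // -dcount_dcount2 // => <-; lia.
Qed.

Lemma rel_diff_set_R :
  rel_diff_set G H ((n - 1) ^ 2 + 1) n ((n - 1) ^ 2 + 1 - 1) (n - 2) R.
Proof.
split.
  by split=> //; [apply: subset_trans subset_R_setD (subsetDl G H) | rewrite card_R addnK].
by split; [apply: dcount_R_out | apply: dcount_R_in].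
Qed.

Let F := [set h *: R | h in H].

Lemma mulHR_injl h1 h2 r1 r2 :
  h1 \in H -> h2 \in H -> r1 \in R -> r2 \in R -> h1 * r1 = h2 * r2 -> h1 = h2.
Proof.
move=> h1H h2H r1R r2R e; suff er : r1 = r2 by move: e; rewrite er => /mulIg.
apply: R_rcoset_inj => //.
by rewrite -(mulKg h1 r1) e mulgA mulgK groupM ?groupV.
Qed.

Lemma lcoset_R_inj : {in H &, injective (fun h => h *: R)}.
Proof.
move=> h1 h2 h1H h2H /= eR; case: (set_0Vmem R) => [R0 | [r rR]].
  have : (#|H| <= 1)%N by move: card_R; rewrite R0 cards0 oH; nia.
  by move/card_le1_eqP/(_ h1 h2 h1H h2H).
have : h1 * r \in h2 *: R by rewrite -eR mem_lcoset mulKg.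
by case/lcosetP=> r' r'R; apply: mulHR_injl.
Qed.

Lemma trivIset_F : trivIset F.
Proof.
apply/trivIsetP=> _ _ /imsetP[h1 h1H ->] /imsetP[h2 h2H ->] neq; rewrite -setI_eq0.
apply: contraNT neq => /set0Pn[_ /setIP[/lcosetP[r1 r1R ->] /lcosetP[r2 r2R e]]].
by rewrite (mulHR_injl h1H h2H r1R r2R e).
Qed.

Lemma cover_F : cover F = G :\: H.
Proof.
apply/setP=> x; apply/bigcupP/idP => [[_ /imsetP[h hH ->] /lcosetP[r rR ->]] | xGH].
  have /setDP[rG rH] := subsetP subset_R_setD r rR.
  by rewrite !inE groupMl // rH groupM // (subsetP sHG).
have /setDP[xG _] := xGH.
have /card_gt0P[r /setIP[rR]] : (0 < #|R :&: x *: H|)%N by rewrite card_R_lcoset.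
rewrite -rlcoset_H // mem_rcoset => rxH.
exists ((r * x^-1)^-1 *: R); first by apply: imset_f; rewrite groupV.
by rewrite mem_lcoset invgK mulgKV.
Qed.

Lemma pdf_family_F : pdf_family G (n * ((n - 1) ^ 2 + 1)) n ((n - 1) ^ 2) F.
Proof.
split; first by rewrite oG mulnC.
- by rewrite card_in_imset ?oH //; apply: lcoset_R_inj.
- move=> A AF; have sAGH : A \subset G :\: H by rewrite -cover_F; apply: bigcup_sup.
  case/imsetP: AF sAGH => h hH -> sAGH; rewrite card_lcoset card_R; split=> //.
  by apply: subset_trans sAGH (setDS _ (sub1G H)).
- by move=> A B AF BF; apply: (trivIsetP trivIset_F).
Qed.

Lemma dcount_lcoset_R h g : h \in H -> g \in G -> g != 1 -> dcount (h *: R) g = dcount R g.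
Proof.
move=> hH gG g1; have hG := subsetP sHG h hH.
rewrite dcount_dcount2 // dcount2_lcoset -mulgA -conjgE -dcount_dcount2 ?conjg_eq1 //.
have [gH | gH] := boolP (g \in H).
  by rewrite !dcount_R_in ?conjg_eq1 ?groupJ.
by rewrite !dcount_R_out // !inE ?groupJr ?gH ?groupJ.
Qed.

Lemma int_count_F g : g \in G -> g != 1 -> int_count F g = (n * dcount R g)%N.
Proof.
move=> gG g1; rewrite /int_count big_imset /=; last exact: lcoset_R_inj.
by rewrite (eq_bigr (fun=> dcount R g)) ?sum_nat_const ?oH // => h hH; apply: dcount_lcoset_R.
Qed.

Lemma DPDF_F : DPDF G (n * ((n - 1) ^ 2 + 1)) n ((n - 1) ^ 2) (n * (n - 2)) 0 F.
Proof.
split; first exact: pdf_family_F.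
move=> g gG; rewrite cover_F; split=> [gGH | gGH g1].
  by rewrite int_count_F ?dcount_R_out ?(setD_group_neq1 gGH).
by rewrite !inE gG andbT negbK in gGH; rewrite int_count_F ?dcount_R_in ?muln0.
Qed.

Lemma EPDF_F : EPDF G (n * ((n - 1) ^ 2 + 1)) n ((n - 1) ^ 2)
  (n * (n - 1) * (n - 2)) (n * (n - 1) ^ 2) F.
Proof.
split; first exact: pdf_family_F.
move=> g gG; rewrite cover_F; split=> [gGH | gGH g1].
  have g1 := setD_group_neq1 gGH; have := dcount_cover trivIset_F g1.
  rewrite cover_F int_count_F ?dcount_R_out ?dcount_setD_group_out // oG oH.
  by case: n => [|[|k]]; nia.
rewrite !inE gG andbT negbK in gGH; have := dcount_cover trivIset_F g1.
by rewrite cover_F int_count_F ?dcount_R_in ?dcount_setD_group_in // oG oH; nia.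
Qed.

End DifferenceSetContainingSubgroup.

Theorem mainTheorem3 (n : nat) (gT : finGroupType) (G H : {group gT}) (D : {set gT}) :
  #|G| = (((n - 1) ^ 2 + 1) * n)%N ->
  H <| G ->
  #|H| = n ->
  diff_set G (((n - 1) ^ 2 + 1) * n) ((n - 1) ^ 2 + n) n D ->
  H \subset D ->
  let m := ((n - 1) ^ 2 + 1)%N in
  let R := D :\: H in
  rel_diff_set G H m n (m - 1) (n - 2) R /\
  DPDF G (n * ((n - 1) ^ 2 + 1)) n ((n - 1) ^ 2) (n * (n - 2)) 0
       [set h *: R | h in H] /\
  EPDF G (n * ((n - 1) ^ 2 + 1)) n ((n - 1) ^ 2) (n * (n - 1) * (n - 2)) (n * (n - 1) ^ 2)
       [set h *: R | h in H].
Proof.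
move=> oG nHG oH [_ sDG oD dD] sHD m R.
by split; [|split]; [apply: rel_diff_set_R | apply: DPDF_F | apply: EPDF_F].
Qed.
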